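(* Let $G=(V,E,p,(V_{E},V_{O}))$ be a parity game, let $D$ be an Odd-dominion of $G$, and let $D'\subseteq D$ be nonempty such that for every edge $(u,w)\in E$ with $u\in D'$ and $w\in D\setminus D'$ we have $u\in V_{E}$. Let $U\subseteq V$ be such that $G\cap U$ is a parity game (every vertex of $U$ has a successor in $U$), $D'\subseteq U$ and $U\cap(D\setminus D')=\emptyset$. Then $D'$ is an Odd-dominion of $G\cap U$.
   Context: A parity game $G=(V,E,p,(V_{E},V_{O}))$: finite $V$ partitioned into $V_{E}$ (Even) and $V_{O}$ (Odd), total edge relation $E$, priorities $p:V\to\mathbb{N}$. Plays are infinite paths; Even wins iff the least priority occurring infinitely often is even. $G\cap U$ denotes the game restricted to vertex set $U$ with edges $E\cap(U\times U)$. A set $D$ is an Odd-dominion of a game if Odd has a strategy in that game such that every play starting in $D$ consistent with it is won by Odd and stays in $D$. *)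

From mathcomp Require Import all_boot.
Set Implicit Arguments. Unset Strict Implicit. Unset Printing Implicit Defensive.

(* A parity game on a vertex set U (a subset of a finite type V), with edge
   relation E restricted to U x U, priorities p, and owner predicate
   [even] : a vertex v belongs to V_E iff [even v], to V_O otherwise. *)

Definition play (V : finType) (U : {set V}) (E : rel V) (pi : nat -> V) : Prop :=
  forall i, pi i \in U /\ E (pi i) (pi i.+1).

(* history-dependent strategies: sigma h v = successor chosen at current
   vertex v after the history h (the vertices visited before v) *)
Definition strategy (V : finType) := seq V -> V -> V.

Definition odd_strategy (V : finType) (U : {set V}) (E : rel V) (even : pred V)
  (sigma : strategy V) : Prop :=
  forall h v, all (fun x => x \in U) h -> v \in U -> ~~ even v ->
    sigma h v \in U /\ E v (sigma h v).

Definition consistent_odd (V : finType) (even : pred V) (sigma : strategy V)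
  (pi : nat -> V) : Prop :=
  forall i, ~~ even (pi i) -> pi i.+1 = sigma (mkseq pi i) (pi i).

Definition inf_often (V : finType) (p : V -> nat) (pi : nat -> V) (k : nat) : Prop :=
  forall n, exists m, n <= m /\ p (pi m) = k.

Definition odd_wins (V : finType) (p : V -> nat) (pi : nat -> V) : Prop :=
  exists k, [/\ inf_often p pi k, odd k & forall k', inf_often p pi k' -> k <= k'].

Definition odd_dominion (V : finType) (U : {set V}) (E : rel V) (p : V -> nat)
  (even : pred V) (D : {set V}) : Prop :=
  D \subset U /\
  exists sigma : strategy V, odd_strategy U E even sigma /\
    forall pi, play U E pi -> pi 0 \in D -> consistent_odd even sigma pi ->
      odd_wins p pi /\ (forall i, pi i \in D).

From mathcomp Require Import all_boot.
Set Implicit Arguments. Unset Strict Implicit. Unset Printing Implicit Defensive.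

(* Odd keeps the dominion strategy sigma on D' as long as sigma stays in D',
   and otherwise moves anywhere inside U.  Along a play of G ∩ U from D' the
   fallback is never used: a finite sigma-consistent path from D extends to a
   sigma-consistent play of G, which stays in D, so an Even move from D' lands
   in D ∩ U ⊆ D', and a sigma move leaving D' would be an edge from an Odd
   vertex of D' into D :\: D'.  Hence the play stays in D' and is a
   sigma-consistent play of G from D, which Odd wins. *)

Lemma eq_in_mkseq (T : Type) (f g : nat -> T) n :
  (forall i, i < n -> f i = g i) -> mkseq f n = mkseq g n.
Proof.
by move=> fg; apply/eq_in_map => i; rewrite mem_iota add0n => /andP[_ /fg].
Qed.

Lemma last_mkseq (T : Type) (f : nat -> T) x0 n : last x0 (mkseq f n.+1) = f n.
Proof. by rewrite (last_nth x0) size_mkseq /= nth_mkseq. Qed.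

Section PrefixExtension.

Variables (V : finType) (E : rel V) (even : pred V) (sigma : strategy V).
Hypothesis total : forall v, exists w, E v w.
Hypothesis sigma_edge : forall h v, ~~ even v -> E v (sigma h v).
Variables (f : nat -> V) (m : nat).

Definition extension_step (s : seq V) : V :=
  let v := last (f 0) s in
  if even v then odflt v [pick w | E v w] else sigma (take (size s).-1 s) v.

Fixpoint extension_history (k : nat) : seq V :=
  if k is k'.+1 then
    let s := extension_history k' in
    rcons s (if k' < m then f k'.+1 else extension_step s)
  else [:: f 0].

Definition extension (k : nat) : V := last (f 0) (extension_history k).

Lemma extension_historyE k : extension_history k = mkseq extension k.+1.
Proof.
elim: k => [|k IH] //; rewrite mkseqS -IH.
by rewrite /extension [extension_history k.+1]/= last_rcons.
Qed.

Lemma extensionS k :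
  extension k.+1 = if k < m then f k.+1 else extension_step (mkseq extension k.+1).
Proof. by rewrite {1}/extension /= last_rcons extension_historyE. Qed.

Lemma extension_prefix i : i <= m -> extension i = f i.
Proof. by case: i => [|i] // lt_im; rewrite extensionS lt_im. Qed.

Hypothesis f_edge : forall i, i < m -> E (f i) (f i.+1).
Hypothesis f_sigma : forall i, i < m -> ~~ even (f i) ->
  f i.+1 = sigma (mkseq f i) (f i).

Lemma extension_play : play [set: V] E extension.
Proof.
move=> i; split; first exact: in_setT.
have [lt_im | le_mi] := ltnP i m.
  by rewrite !extension_prefix ?f_edge // ltnW.
rewrite extensionS ltnNge le_mi /extension_step last_mkseq.
case: ifP => [ev_i | /negbT odd_i]; last exact: sigma_edge.
case: pickP => [w // | noE]; have [w Ew] := total (extension i).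
by rewrite noE in Ew.
Qed.

Lemma extension_consistent : consistent_odd even sigma extension.
Proof.
move=> i odd_i; have [lt_im | le_mi] := ltnP i m.
  have pre_i : mkseq extension i = mkseq f i.
    apply: eq_in_mkseq => j lt_ji.
    exact/extension_prefix/ltnW/(ltn_trans lt_ji).
  have ext_i : extension i = f i by exact/extension_prefix/ltnW.
  rewrite ext_i in odd_i *; rewrite pre_i extension_prefix //; exact: f_sigma.
rewrite extensionS ltnNge le_mi /extension_step last_mkseq (negbTE odd_i).
by rewrite mkseqS -cats1 size_cat size_mkseq addn1 take_size_cat ?size_mkseq.
Qed.
End PrefixExtension.

Lemma odd_strategy_setT_edge (V : finType) (E : rel V) (even : pred V)
    (sigma : strategy V) :
  odd_strategy [set: V] E even sigma -> forall h v, ~~ even v -> E v (sigma h v).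
Proof.
move=> legal h v odd_v.
by have [] := legal h v (introT allP (fun x _ => in_setT x)) (in_setT v) odd_v.
Qed.

Lemma consistent_path_extends_in_dominion (V : finType) (E : rel V) (even : pred V)
    (D : {set V}) (sigma : strategy V) (f : nat -> V) (m : nat) :
  (forall v, exists w, E v w) ->
  odd_strategy [set: V] E even sigma ->
  (forall pi, play [set: V] E pi -> pi 0 \in D -> consistent_odd even sigma pi ->
     forall i, pi i \in D) ->
  f 0 \in D ->
  (forall i, i < m -> E (f i) (f i.+1)) ->
  (forall i, i < m -> ~~ even (f i) -> f i.+1 = sigma (mkseq f i) (f i)) ->
  exists pi, [/\ consistent_odd even sigma pi, forall i, pi i \in D
               & forall i, i <= m -> pi i = f i].
Proof.
move=> total /odd_strategy_setT_edge legal stays f0D f_edge f_sigma.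
exists (extension E even sigma f m).
have ext_play := extension_play total legal f_edge.
have ext_sigma := extension_consistent (E := E) f_sigma.
split=> //; last exact: extension_prefix.
by apply: stays; rewrite ?extension_prefix.
Qed.

Section RestrictedDominion.

Variables (V : finType) (E : rel V) (even : pred V).
Variables (D D' U : {set V}) (sigma : strategy V).
Hypothesis total : forall v, exists w, E v w.
Hypothesis sigma_legal : odd_strategy [set: V] E even sigma.
Hypothesis sigma_stays : forall pi, play [set: V] E pi -> pi 0 \in D ->
  consistent_odd even sigma pi -> forall i, pi i \in D.
Hypothesis D'_sub_D : D' \subset D.
Hypothesis exit_even : forall u w, E u w -> u \in D' -> w \in D :\: D' -> even u.
Hypothesis U_total : forall u, u \in U -> exists2 w, w \in U & E u w.
Hypothesis D'_sub_U : D' \subset U.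
Hypothesis U_disj : [disjoint U & D :\: D'].

Definition restricted_strategy : strategy V := fun h v =>
  if (v \in D') && (sigma h v \in D') then sigma h v
  else odflt v [pick w in U | E v w].

Lemma restricted_strategy_legal : odd_strategy U E even restricted_strategy.
Proof.
move=> h v _ Uv odd_v; rewrite /restricted_strategy.
case: ifP => [/andP[_ sigma_D'] | _].
  by split; [exact: (subsetP D'_sub_U) | exact: (odd_strategy_setT_edge sigma_legal)].
case: pickP => [w /andP[] // | noE].
by have [w Uw Ew] := U_total Uv; move: (noE w); rewrite Uw Ew.
Qed.

Variable pi : nat -> V.
Hypothesis pi_play : play U E pi.
Hypothesis pi_start : pi 0 \in D'.
Hypothesis pi_consistent : consistent_odd even restricted_strategy pi.

Lemma restricted_play_step n :
  (forall i, i < n -> ~~ even (pi i) -> pi i.+1 = sigma (mkseq pi i) (pi i)) ->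
  pi n \in D' ->
  pi n.+1 \in D' /\ (~~ even (pi n) -> pi n.+1 = sigma (mkseq pi n) (pi n)).
Proof.
move=> pi_sigma D'n.
have pi0D : pi 0 \in D by exact: (subsetP D'_sub_D).
have pi_edge m i : i < m -> E (pi i) (pi i.+1) by case: (pi_play i).
case: (boolP (even (pi n))) => [even_n | odd_n].
  have pi_sigma' i : i < n.+1 -> ~~ even (pi i) -> pi i.+1 = sigma (mkseq pi i) (pi i).
    by rewrite ltnS leq_eqVlt => /predU1P[-> | /pi_sigma //]; rewrite even_n.
  have [pi' [_ pi'D pi'_pi]] := consistent_path_extends_in_dominion total sigma_legal
    sigma_stays pi0D (pi_edge n.+1) pi_sigma'.
  split=> //; have := pi'D n.+1; rewrite pi'_pi // => Dn1.
  have Un1 : pi n.+1 \in U by case: (pi_play n.+1).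
  by move: (disjointFr U_disj Un1); rewrite inE Dn1 andbT => /negbFE.
have [pi' [pi'_sigma pi'D pi'_pi]] :=
  consistent_path_extends_in_dominion total sigma_legal sigma_stays pi0D (pi_edge n) pi_sigma.
have pre_n : mkseq pi' n = mkseq pi n.
  by apply: eq_in_mkseq => i /ltnW; apply: pi'_pi.
have sigma_D : sigma (mkseq pi n) (pi n) \in D.
  by rewrite -pre_n -(pi'_pi n) // -pi'_sigma ?pi'D ?pi'_pi.
have sigma_D' : sigma (mkseq pi n) (pi n) \in D'.
  have edge_n := odd_strategy_setT_edge sigma_legal (mkseq pi n) odd_n.
  apply: contraTT odd_n => notD'; rewrite negbK; apply: exit_even edge_n D'n _.
  by rewrite inE notD' sigma_D.
by rewrite (pi_consistent odd_n) /restricted_strategy D'n sigma_D'.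
Qed.

Lemma restricted_play_follows_sigma :
  (forall n, pi n \in D') /\ consistent_odd even sigma pi.
Proof.
have inv n : pi n \in D' /\
    forall i, i < n -> ~~ even (pi i) -> pi i.+1 = sigma (mkseq pi i) (pi i).
  elim: n => [|n [D'n pi_sigma]]; first by [].
  have [D'n1 sigma_n] := restricted_play_step pi_sigma D'n.
  split=> // i; rewrite ltnS leq_eqVlt => /predU1P[-> // | /pi_sigma //].
by split=> [n | i]; [case: (inv n) | case: (inv i.+1) => _; apply].
Qed.

End RestrictedDominion.

Theorem lemma7 (V : finType) (E : rel V) (p : V -> nat) (even : pred V)
  (D D' U : {set V}) :
  (forall v : V, exists w, E v w) ->
  odd_dominion [set: V] E p even D ->
  D' \subset D -> D' != set0 ->
  (forall u w, E u w -> u \in D' -> w \in D :\: D' -> even u) ->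
  (forall u, u \in U -> exists2 w, w \in U & E u w) ->
  D' \subset U -> [disjoint U & D :\: D'] ->
  odd_dominion U E p even D'.
Proof.
move=> total [_ [sigma [sigma_legal sigma_wins]]] D'_sub_D _ exit_even U_total D'_sub_U U_disj.
split=> //; exists (restricted_strategy E D' U sigma).
split; first exact: restricted_strategy_legal.
have sigma_stays pi' pi'_play pi'_start pi'_sigma :=
  (sigma_wins pi' pi'_play pi'_start pi'_sigma).2.
move=> pi pi_play pi_start pi_consistent.
have [D'_pi pi_sigma] := restricted_play_follows_sigma total sigma_legal sigma_stays
  D'_sub_D exit_even U_disj pi_play pi_start pi_consistent.
have pi_play_G : play [set: V] E pi by move=> i; rewrite in_setT; case: (pi_play i).
by split=> //; case: (sigma_wins pi pi_play_G (subsetP D'_sub_D _ pi_start) pi_sigma).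
Qed.
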